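(* If $X$ is a v-fibrant bisimplicial set, then $X$ is categorically constant, i.e. for every $n\ge0$ the map $X_{\star0}\to X_{\star n}$ induced by $[n]\to[0]$ is a weak categorical equivalence.
   Context: For a bisimplicial set $X$ and simplicial set $A$, $A\backslash X$ is the simplicial set whose $n$-simplices are maps $A\Box\Delta[n]\to X$, $(A\Box B)_{mn}=A_m\times B_n$. $X$ is v-fibrant if for every $m\ge0$ the map $\Delta[m]\backslash X\to\partial\Delta[m]\backslash X$ is a Kan fibration. $X_{\star n}$ denotes the $n$-th row of $X$. A map of simplicial sets $u:A\to B$ is a weak categorical equivalence if $\tau_0(B,Z)\to\tau_0(A,Z)$ is bijective for every quasi-category $Z$, where $\tau_0(A,Z)$ is the set of isomorphism classes of objects of the fundamental category of $Z^A$. *)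

From Stdlib Require Import FunctionalExtensionality ProofIrrelevance.
From mathcomp Require Import all_boot.
Set Implicit Arguments. Unset Strict Implicit. Unset Printing Implicit Defensive.

Definition monob m n (f : {ffun 'I_m.+1 -> 'I_n.+1}) : bool :=
  [forall i : 'I_m.+1, forall j : 'I_m.+1, (i <= j) ==> (f i <= f j)].

Lemma monoP m n (f : {ffun 'I_m.+1 -> 'I_n.+1}) :
  reflect (forall i j : 'I_m.+1, i <= j -> f i <= f j) (monob f).
Proof.
apply: (iffP forallP) => [H i j hij | H i]; first by move: (H i) => /forallP /(_ j) /implyP; apply.
by apply/forallP => j; apply/implyP; apply: H.
Qed.

Definition hom m n := {f : {ffun 'I_m.+1 -> 'I_n.+1} | monob f}.
Definition homf m n (f : hom m n) : 'I_m.+1 -> 'I_n.+1 := fun i => sval f i.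

Lemma hom_eq m n (f g : hom m n) : (forall i, homf f i = homf g i) -> f = g.
Proof. by move=> H; apply: val_inj; apply/ffunP => i; exact: H. Qed.

Lemma mkhom_subproof m n (f : 'I_m.+1 -> 'I_n.+1)
  (Hf : forall i j : 'I_m.+1, i <= j -> f i <= f j) : monob [ffun i => f i].
Proof. by apply/monoP => i j hij; rewrite !ffunE; apply: Hf. Qed.

Definition mkhom m n (f : 'I_m.+1 -> 'I_n.+1)
  (Hf : forall i j : 'I_m.+1, i <= j -> f i <= f j) : hom m n :=
  exist _ [ffun i => f i] (mkhom_subproof Hf).

Lemma mkhomE m n f Hf i : homf (@mkhom m n f Hf) i = f i.
Proof. by rewrite /homf /= ffunE. Qed.

Lemma homf_mono m n (f : hom m n) (i j : 'I_m.+1) : i <= j -> homf f i <= homf f j.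
Proof. by move: (svalP f) => /monoP; apply. Qed.

Definition hid n : hom n n := @mkhom n n id (fun i j h => h).

Definition hcomp m n p (g : hom n p) (f : hom m n) : hom m p :=
  @mkhom m p (fun i => homf g (homf f i))
    (fun i j h => homf_mono g (homf_mono f h)).

Lemma hcomp_idl m n (f : hom m n) : hcomp (hid n) f = f.
Proof. by apply: hom_eq => i; rewrite !mkhomE. Qed.
Lemma hcomp_idr m n (f : hom m n) : hcomp f (hid m) = f.
Proof. by apply: hom_eq => i; rewrite !mkhomE. Qed.
Lemma hcompA m n p q (h : hom p q) (g : hom n p) (f : hom m n) :
  hcomp h (hcomp g f) = hcomp (hcomp h g) f.
Proof. by apply: hom_eq => i; rewrite !mkhomE. Qed.

Definition coface n (i : 'I_n.+2) : hom n n.+1 :=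
  @mkhom n n.+1 (lift i) (fun a b h => (introT idP (eq_ind_r is_true h (leq_bump2 i a b)))).
Definition toZero n : hom n 0 := @mkhom n 0 (fun _ => ord0) (fun _ _ _ => leqnn 0).

Record sSet := SSet {
  simp :> nat -> Type;
  act : forall m n, hom m n -> simp n -> simp m;
  act_id : forall n (x : simp n), act (hid n) x = x;
  act_comp : forall m n p (f : hom m n) (g : hom n p) (x : simp p),
      act (hcomp g f) x = act f (act g x) }.
Arguments act {s m n} f x.

Record smap (A B : sSet) := SMap {
  smfun :> forall n, A n -> B n;
  smnat : forall m n (f : hom m n) (x : A n), smfun (act f x) = act f (smfun x) }.
Arguments smfun {A B} s {n} x.

Lemma smap_eq A B (f g : smap A B) : (forall n x, f n x = g n x) -> f = g.
Proof.
case: f g => f Hf [g Hg] /= H.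
have E : f = g.
  by apply: functional_extensionality_dep => n; apply: functional_extensionality => x; exact: H.
subst g; f_equal; apply: proof_irrelevance.
Qed.

Definition smid A : smap A A := @SMap A A (fun n x => x) (fun m n f x => erefl).
Definition smcomp A B C (g : smap B C) (f : smap A B) : smap A C :=
  @SMap A C (fun n x => g n (f n x))
    (fun m n h x => eq_trans (f_equal (g m) (smnat f h x)) (smnat g h (f n x))).

Definition Delta (n : nat) : sSet :=
  @SSet (fun m => hom m n) (fun m p f g => hcomp g f)
    (fun p g => hcomp_idr g) (fun m p q f g h => hcompA h g f).

Definition deltaMap m n (f : hom m n) : smap (Delta m) (Delta n) :=
  @SMap (Delta m) (Delta n) (fun j g => hcomp f g) (fun j k h g => hcompA f g h).

Section SubDelta.
Variables (n : nat) (P : forall j, hom j n -> bool)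
  (HP : forall j k (g : hom j k) (f : hom k n), P f -> P (hcomp f g)).

Definition subDelta_act j k (g : hom j k) (x : {f : hom k n | P f}) : {f : hom j n | P f} :=
  exist _ (hcomp (sval x) g) (HP g (svalP x)).

Lemma subDelta_id k (x : {f : hom k n | P f}) : subDelta_act (hid k) x = x.
Proof. by apply: val_inj; rewrite /= hcomp_idr. Qed.
Lemma subDelta_comp j k l (f : hom j k) (g : hom k l) (x : {f : hom l n | P f}) :
  subDelta_act (hcomp g f) x = subDelta_act f (subDelta_act g x).
Proof. by apply: val_inj; rewrite /= hcompA. Qed.

Definition subDelta : sSet := @SSet (fun j => {f : hom j n | P f}) subDelta_act
  subDelta_id subDelta_comp.

Definition subDeltaIncl : smap subDelta (Delta n) :=
  @SMap subDelta (Delta n) (fun j x => sval x) (fun j k g x => erefl).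
End SubDelta.

Definition bdry_pred n j (f : hom j n) : bool :=
  [exists i : 'I_n.+1, [forall a : 'I_j.+1, homf f a != i]].
Lemma bdry_closed n j k (g : hom j k) (f : hom k n) : bdry_pred f -> bdry_pred (hcomp f g).
Proof.
case/existsP => i /forallP H; apply/existsP; exists i; apply/forallP => a.
by rewrite mkhomE H.
Qed.
Definition bdry n : sSet := subDelta (@bdry_closed n).
Definition bdryIncl n : smap (bdry n) (Delta n) := subDeltaIncl (@bdry_closed n).

Definition horn_pred n (k : 'I_n.+1) j (f : hom j n) : bool :=
  [exists i : 'I_n.+1, (i != k) && [forall a : 'I_j.+1, homf f a != i]].
Lemma horn_closed n k j l (g : hom j l) (f : hom l n) :
  horn_pred k f -> horn_pred k (hcomp f g).
Proof.
case/existsP => i /andP [ik /forallP H]; apply/existsP; exists i; rewrite ik /=.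
by apply/forallP => a; rewrite mkhomE H.
Qed.
Definition horn n (k : 'I_n.+1) : sSet := subDelta (@horn_closed n k).
Definition hornIncl n (k : 'I_n.+1) : smap (horn k) (Delta n) := subDeltaIncl (@horn_closed n k).

Definition kan_fibration (E B : sSet) (p : smap E B) : Prop :=
  forall (n : nat) (k : 'I_n.+1), 0 < n ->
  forall (h : smap (horn k) E) (b : smap (Delta n) B),
    (forall j (x : horn k j), p j (h j x) = b j (hornIncl k j x)) ->
    exists l : smap (Delta n) E,
      (forall j (x : horn k j), l j (hornIncl k j x) = h j x) /\
      (forall j (x : Delta n j), p j (l j x) = b j x).

Definition quasi_category (Z : sSet) : Prop :=
  forall (n : nat) (k : 'I_n.+1), 0 < k < n ->
  forall h : smap (horn k) Z,
    exists l : smap (Delta n) Z, forall j (x : horn k j), l j (hornIncl k j x) = h j x.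

Definition prodS (A B : sSet) : sSet :=
  @SSet (fun n => (A n * B n)%type) (fun m n f x => (act f x.1, act f x.2))
    (fun n x => ltac:(by case: x => a b; rewrite /= !act_id))
    (fun m n p f g x => ltac:(by rewrite /= !act_comp)).

Definition smprod A A' B B' (u : smap A A') (v : smap B B') : smap (prodS A B) (prodS A' B') :=
  @SMap (prodS A B) (prodS A' B') (fun n x => (u n x.1, v n x.2))
    (fun m n f x => ltac:(by rewrite /= !smnat)).

Definition expS (A Z : sSet) : sSet :=
  @SSet (fun n => smap (prodS A (Delta n)) Z)
    (fun m n f s => smcomp s (smprod (smid A) (deltaMap f)))
    (fun n s => ltac:(by apply: smap_eq => j [a g]; rewrite /= hcomp_idl))
    (fun m n p f g s => ltac:(by apply: smap_eq => j [a h]; rewrite /= hcompA)).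

Section HoCat.
Variable K : sSet.
Definition ord1_2 : 'I_2 := @Ordinal 2 1 isT.
Definition ord1_3 : 'I_3 := @Ordinal 3 1 isT.
Definition ord2_3 : 'I_3 := @Ordinal 3 2 isT.
Definition esrc (e : K 1) : K 0 := act (coface ord1_2) e.
Definition etgt (e : K 1) : K 0 := act (coface (ord0 : 'I_2)) e.
Definition face2 (i : 'I_3) (s : K 2) : K 1 := act (coface i) s.
Definition degen (x : K 0) : K 1 := act (toZero 1) x.

Inductive kpath : K 0 -> K 0 -> seq (K 1) -> Prop :=
| kpath_nil x : kpath x x [::]
| kpath_cons x y e p : esrc e = x -> kpath (etgt e) y p -> kpath x y (e :: p).

(* the congruence on paths defining the morphisms of tau_1 K *)
Inductive hrel : K 0 -> K 0 -> seq (K 1) -> seq (K 1) -> Prop :=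
| hrel_refl x y p : kpath x y p -> hrel x y p p
| hrel_sym x y p q : hrel x y p q -> hrel x y q p
| hrel_trans x y p q r : hrel x y p q -> hrel x y q r -> hrel x y p r
| hrel_cong z x y w q p p' r : kpath z x q -> hrel x y p p' -> kpath y w r ->
    hrel z w (q ++ p ++ r) (q ++ p' ++ r)
| hrel_degen x : hrel x x [:: degen x] [::]
| hrel_simplex x z (s : K 2) : kpath x z [:: face2 ord2_3 s; face2 ord0 s] ->
    hrel x z [:: face2 ord2_3 s; face2 ord0 s] [:: face2 ord1_3 s].

Definition tau1_iso (x y : K 0) : Prop :=
  exists p q, [/\ kpath x y p, kpath y x q, hrel x x (p ++ q) [::] & hrel y y (q ++ p) [::]].
End HoCat.

Definition precomp (A B Z : sSet) (u : smap A B) (b : expS B Z 0) : expS A Z 0 :=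
  smcomp b (smprod u (smid (Delta 0))).

Definition weak_cat_equiv (A B : sSet) (u : smap A B) : Prop :=
  forall Z : sSet, quasi_category Z ->
    (forall b b' : expS B Z 0,
        tau1_iso (precomp u b) (precomp u b') -> tau1_iso b b') /\
    (forall a : expS A Z 0, exists b : expS B Z 0, tau1_iso (precomp u b) a).

Record bsSet := BSSet {
  bsimp :> nat -> nat -> Type;
  bact : forall m m' n n', hom m' m -> hom n' n -> bsimp m n -> bsimp m' n';
  bact_id : forall m n (x : bsimp m n), bact (hid m) (hid n) x = x;
  bact_comp : forall m m' m'' n n' n'' (f : hom m' m) (f' : hom m'' m')
      (g : hom n' n) (g' : hom n'' n') (x : bsimp m n),
      bact (hcomp f f') (hcomp g g') x = bact f' g' (bact f g x) }.
Arguments bact {_ m m' n n'} f g x.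

Record bsmap (X Y : bsSet) := BSMap {
  bsmfun :> forall m n, X m n -> Y m n;
  bsmnat : forall m m' n n' (f : hom m' m) (g : hom n' n) (x : X m n),
      bsmfun (bact f g x) = bact f g (bsmfun x) }.
Arguments bsmfun {X Y} _ {m n} x.

Lemma bsmap_eq X Y (f g : bsmap X Y) : (forall m n x, f m n x = g m n x) -> f = g.
Proof.
case: f g => f Hf [g Hg] /= H.
have E : f = g.
  apply: functional_extensionality_dep => m; apply: functional_extensionality_dep => n.
  by apply: functional_extensionality => x; exact: H.
subst g; f_equal; apply: proof_irrelevance.
Qed.

Definition bscomp X Y W (g : bsmap Y W) (f : bsmap X Y) : bsmap X W :=
  @BSMap X W (fun m n x => g m n (f m n x))
    (fun m m' n n' a b x => eq_trans (f_equal (g m' n') (bsmnat f a b x)) (bsmnat g a b (f m n x))).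

Definition box (A B : sSet) : bsSet :=
  @BSSet (fun m n => (A m * B n)%type) (fun m m' n n' f g x => (act f x.1, act g x.2))
    (fun m n x => ltac:(by case: x => a b; rewrite /= !act_id))
    (fun m m' m'' n n' n'' f f' g g' x => ltac:(by rewrite /= !act_comp)).

Definition boxmap A A' B B' (u : smap A A') (v : smap B B') : bsmap (box A B) (box A' B') :=
  @BSMap (box A B) (box A' B') (fun m n x => (u m x.1, v n x.2))
    (fun m m' n n' f g x => ltac:(by rewrite /= !smnat)).

Definition slash (A : sSet) (X : bsSet) : sSet :=
  @SSet (fun n => bsmap (box A (Delta n)) X)
    (fun m n f s => bscomp s (boxmap (smid A) (deltaMap f)))
    (fun n s => ltac:(by apply: bsmap_eq => i j [a g]; rewrite /= hcomp_idl))
    (fun m n p f g s => ltac:(by apply: bsmap_eq => i j [a h]; rewrite /= hcompA)).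

Definition slashMap (A B : sSet) (u : smap A B) (X : bsSet) : smap (slash B X) (slash A X) :=
  @SMap (slash B X) (slash A X) (fun n s => bscomp s (boxmap u (smid (Delta n))))
    (fun m n f s => ltac:(by apply: bsmap_eq => i j [a g])).

Definition v_fibrant (X : bsSet) : Prop :=
  forall m : nat, kan_fibration (slashMap (bdryIncl m) X).

Lemma hid_comp n : hid n = hcomp (hid n) (hid n).
Proof. by rewrite hcomp_idl. Qed.

Definition row (X : bsSet) (n : nat) : sSet :=
  @SSet (fun m => X m n) (fun m m' f x => bact f (hid n) x)
    (fun m x => bact_id x)
    (fun m m' m'' f g x => ltac:(by rewrite [in LHS]hid_comp bact_comp)).

Lemma rowMap_nat (X : bsSet) n m m' (f : hom m' m) (x : X m 0) :
  bact (hid m') (toZero n) (bact f (hid 0) x) = bact f (hid n) (bact (hid m) (toZero n) x).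
Proof.
by rewrite -!bact_comp !hcomp_idl !hcomp_idr.
Qed.

Definition rowMap (X : bsSet) (n : nat) : smap (row X 0) (row X n) :=
  @SMap (row X 0) (row X n) (fun m x => bact (hid m) (toZero n) x)
    (fun m m' f x => rowMap_nat n f x).

From mathcomp Require Import all_boot zify.
From Stdlib Require Import Classical ClassicalEpsilon.
Set Implicit Arguments. Unset Strict Implicit. Unset Printing Implicit Defensive.

(** Let [s : X_{*0} -> X_{*n}] be induced by [[n] -> [0]] and [r : X_{*n} -> X_{*0}]
    by the vertex [0 : [0] -> [n]], so that [r s = id] and [s r] is induced by the
    constant map [[n] -> [n]] at [0].  By induction on [n] we build a homotopy
    [H_n : X_{*n} x J -> X_{*n}] from the identity to [s r], where [J] is the nerve
    of the free-standing isomorphism, such that [H_{n+1}] agrees with [H_n] on the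
    faces [d_i], [i <> 0].  [H_{n+1}] is built simplex by simplex (the
    Eilenberg-Zilber lemma takes care of degenerate simplices); on a nondegenerate
    simplex the required value is a lift of the horn [Lambda^{n+1}_0] against the
    Kan fibration [Delta[m] \ X -> bdry Delta[m] \ X].  Precomposing a vertex [b]
    of [Z^{X_{*n}}] with [H_n] gives a map [J -> Z^{X_{*n}}], hence an isomorphism
    [b ~ b s r] in the fundamental category, so precompositions with [s] and [r] are
    mutually inverse on isomorphism classes. *)

(** * The simplex category *)

Lemma homf_comp m n p (g : hom n p) (f : hom m n) i :
  homf (hcomp g f) i = homf g (homf f i).
Proof. exact: mkhomE. Qed.

Lemma homf_hid n i : homf (hid n) i = i.
Proof. exact: mkhomE. Qed.

Lemma homf_coface n (i : 'I_n.+2) a : homf (coface i) a = lift i a.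
Proof. exact: mkhomE. Qed.

Lemma hom_to0_eq k (f g : hom k 0) : f = g.
Proof. by apply: hom_eq => i; rewrite !ord1. Qed.

Lemma coface_inj k n (i : 'I_n.+2) (f g : hom k n) :
  hcomp (coface i) f = hcomp (coface i) g -> f = g.
Proof.
move=> e; apply: hom_eq => a; apply: (@lift_inj _ i).
by rewrite -!homf_coface -!homf_comp e.
Qed.

Definition hsurj m n (f : hom m n) : Prop := forall c, exists a, homf f a = c.

Lemma hsurj_id n : hsurj (hid n).
Proof. by move=> c; exists c; rewrite homf_hid. Qed.

Lemma hsurj_comp m n p (g : hom n p) (f : hom m n) :
  hsurj g -> hsurj f -> hsurj (hcomp g f).
Proof.
by move=> sg sf c; case: (sg c) => b <-; case: (sf b) => a <-; exists a; rewrite homf_comp.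
Qed.

Lemma not_hsurj_miss m n (f : hom m n) : ~ hsurj f -> exists c, forall a, homf f a != c.
Proof.
move=> nsf; apply: NNPP => nmiss; apply: nsf => c; apply: NNPP => nhit.
by apply: nmiss; exists c => a; apply/eqP => fac; apply: nhit; exists a.
Qed.

Lemma leq_unbump2 h i j : i <= j -> unbump h i <= unbump h j.
Proof. by move=> le_ij; rewrite -leq_bump unbumpKcond (leq_trans le_ij) ?leq_addl. Qed.

(** Corestriction along the coface [i] of a map missing [i] (the [minn] only
    keeps junk values in range). *)
Definition hunlift_fun k n (i : 'I_n.+2) (f : hom k n.+1) (a : 'I_k.+1) : 'I_n.+1 :=
  Ordinal (leq_ltn_trans (geq_minr (unbump i (homf f a)) n) (ltnSn n)).

Lemma hunlift_mono k n (i : 'I_n.+2) (f : hom k n.+1) (a b : 'I_k.+1) :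
  a <= b -> hunlift_fun i f a <= hunlift_fun i f b.
Proof.
move=> le_ab; rewrite /= leq_min geq_minr andbT.
exact/(leq_trans (geq_minl _ _))/leq_unbump2/homf_mono.
Qed.

Definition hunlift k n (i : 'I_n.+2) (f : hom k n.+1) : hom k n :=
  mkhom (@hunlift_mono k n i f).

Lemma hunliftK k n (i : 'I_n.+2) (f : hom k n.+1) :
  (forall a, homf f a != i) -> hcomp (coface i) (hunlift i f) = f.
Proof.
move=> miss; apply: hom_eq => a; rewrite homf_comp homf_coface mkhomE.
have fa_neq : (homf f a : nat) != i := miss a.
have le_n : unbump i (homf f a) <= n.
  by move: (ltn_ord (homf f a)) (ltn_ord i) fa_neq; rewrite /unbump; lia.
by apply: val_inj; rewrite /= (minn_idPl le_n) unbumpK.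
Qed.

Lemma bump_swap (i j a b c : nat) : i != j -> bump j a = i -> bump i b = j ->
  bump j (bump a c) = bump i (bump b c).
Proof.
rewrite /bump => i_neq_j.
case: (leqP j a) => ?; case: (leqP i b) => ? /= ei ej; subst; try lia;
case: (leqP a c) => ?; case: (leqP b c) => ? /=; try lia;
rewrite ?add1n ?add0n; case: leqP => ?; case: leqP => ?; lia.
Qed.

Lemma lift_ord0 N (i : 'I_N.+2) : i != ord0 -> lift i ord0 = ord0.
Proof.
move=> i_neq0; apply: val_inj; rewrite /= /bump leqn0.
by have -> : (i == 0 :> nat) = false by apply/negbTE.
Qed.

Lemma coface_square n (i j : 'I_n.+3) k (f g : hom k n.+1) :
  i != j -> hcomp (coface j) f = hcomp (coface i) g ->
  exists a b (h : hom k n), [/\ lift j a = i, lift i b = j,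
    f = hcomp (coface a) h, g = hcomp (coface b) h &
    hcomp (coface j) (coface a) = hcomp (coface i) (coface b)].
Proof.
move=> i_neq_j e.
case: (unliftP j i) => [a def_i|eij]; last by rewrite eij eqxx in i_neq_j.
case: (unliftP i j) => [b def_j|eji]; last by rewrite eji eqxx in i_neq_j.
have square : hcomp (coface j) (coface a) = hcomp (coface i) (coface b).
  apply: hom_eq => c; rewrite !homf_comp !homf_coface; apply: val_inj => /=.
  by apply: bump_swap; [exact: i_neq_j|rewrite def_i|rewrite def_j].
have ef c : homf (hcomp (coface j) f) c = homf (hcomp (coface i) g) c by rewrite e.
have f_miss c : homf f c != a.
  apply/eqP => fc; move: (ef c); rewrite !homf_comp !homf_coface fc -def_i.
  by move/eqP; rewrite eq_liftF.
exists a, b, (hunlift a f); split; rewrite ?hunliftK //.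
apply: (coface_inj (i := i)).
by rewrite [RHS]hcompA -square -hcompA hunliftK // e.
Qed.

Definition vertex0 n : hom 0 n := @mkhom 0 n (fun _ => ord0) (fun _ _ _ => leqnn 0).

Definition const0 n : hom n n := hcomp (vertex0 n) (toZero n).

Lemma const0_coface n (i : 'I_n.+2) :
  i != ord0 -> hcomp (const0 n.+1) (coface i) = hcomp (coface i) (const0 n).
Proof. by move=> i_neq0; apply: hom_eq => a; rewrite !homf_comp !mkhomE lift_ord0. Qed.

Lemma hom_factor_surj l k (f : hom k l) : exists j (s : hom k j) (i : hom j l),
  [/\ hsurj s, f = hcomp i s, j <= l & hsurj f \/ j < l].
Proof.
elim: l k f => [|l IHl] k f.
  have f_surj : hsurj f by move=> c; exists ord0; rewrite !ord1.
  by exists 0, f, (hid 0); rewrite hcomp_idl; split => //; left.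
have [f_surj|f_nsurj] := classic (hsurj f).
  by exists l.+1, f, (hid l.+1); rewrite hcomp_idl; split => //; left.
have [c miss] := not_hsurj_miss f_nsurj.
have [j [s [i [s_surj def_f le_jl _]]]] := IHl _ (hunlift c f).
exists j, s, (hcomp (coface c) i); split => //; [|exact: leqW|by right].
by rewrite -hcompA -def_f hunliftK.
Qed.

Lemma section_mono k j (s : hom k j) (d : 'I_j.+1 -> 'I_k.+1) :
  (forall c, homf s (d c) = c) -> forall c c' : 'I_j.+1, c <= c' -> d c <= d c'.
Proof.
move=> sdK c c' le_cc'; case: (ltnP (d c') (d c)) => // lt_d.
have := homf_mono s (ltnW lt_d); rewrite !sdK => le_c'c.
have e : c = c' by apply/val_inj/eqP; rewrite eqn_leq le_cc' le_c'c.
by rewrite e ltnn in lt_d.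
Qed.

Lemma hsurj_section_at k j (s : hom k j) (a : 'I_k.+1) : hsurj s ->
  exists d : hom j k, hcomp s d = hid j /\ homf d (homf s a) = a.
Proof.
move=> s_surj.
pose d c := if c == homf s a then a else odflt a [pick b | homf s b == c].
have sdK c : homf s (d c) = c.
  rewrite /d; case: eqP => [-> //|_]; case: pickP => [b /eqP //|none].
  by have [b sb] := s_surj c; move: (none b); rewrite sb eqxx.
exists (mkhom (section_mono sdK)); split.
  by apply: hom_eq => c; rewrite homf_comp !mkhomE sdK.
by rewrite mkhomE /d eqxx.
Qed.

Lemma hsurj_leq k j (s : hom k j) : hsurj s -> j <= k.
Proof.
move=> /(hsurj_section_at ord0) [d [sdK _]].
have d_inj : injective (homf d).
  by move=> c c' e; rewrite -(homf_hid c) -(homf_hid c') -sdK !homf_comp e.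
by have := @leq_card _ _ (homf d) d_inj; rewrite !card_ord.
Qed.

Lemma strict_mono_ord_ge n (g : 'I_n -> 'I_n) :
  {homo g : a b / a < b} -> forall a : 'I_n, a <= g a.
Proof.
move=> g_mono [a lt_an]; elim: a lt_an => [//|a IHa] lt_an.
have lt_a := ltnW lt_an.
by apply: leq_ltn_trans (IHa lt_a) (g_mono (Ordinal lt_a) (Ordinal lt_an) _).
Qed.

Lemma strict_mono_ord_id n (g : 'I_n -> 'I_n) : {homo g : a b / a < b} -> g =1 id.
Proof.
move=> g_mono a; apply/val_inj/eqP; rewrite eqn_leq (strict_mono_ord_ge g_mono) andbT.
pose g' b := rev_ord (g (rev_ord b)).
have g'_mono : {homo g' : b b' / b < b'}.
  move=> b b' lt_bb'; have lt_rev : rev_ord b' < rev_ord b by rewrite /= ltn_sub2lE.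
  by rewrite /g' /= ltn_sub2lE // ltnS; apply: g_mono.
have := strict_mono_ord_ge g'_mono (rev_ord a).
by rewrite /g' rev_ordK /= leq_sub2lE // ltnS.
Qed.

Lemma hsurj_endo_hid j (g : hom j j) : hsurj g -> g = hid j.
Proof.
move=> /(hsurj_section_at ord0) [d [gdK _]].
have dE : homf d =1 id.
  apply: strict_mono_ord_id => c c' lt_cc'.
  rewrite ltn_neqAle (homf_mono _ (ltnW lt_cc')) andbT.
  apply/negP => /eqP/val_inj/(congr1 (homf g)); rewrite -!homf_comp gdK !homf_hid.
  by move=> e; rewrite e ltnn in lt_cc'.
by apply: hom_eq => c; rewrite homf_hid -{1}(dE c) -homf_comp gdK homf_hid.
Qed.

(** * The Eilenberg-Zilber lemma *)

Section EilenbergZilber.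
Variable B : sSet.

Definition nondegenerate j (x : B j) : Prop :=
  ~ exists k (y : B k) (f : hom j k), k < j /\ x = act f y.

Lemma nondegenerate_endo j (x y : B j) (h : hom j j) :
  nondegenerate x -> x = act h y -> h = hid j.
Proof.
move=> ndx def_x; apply: hsurj_endo_hid; apply: NNPP => h_nsurj.
have [i [t [u [_ def_h _ [//|lt_ij]]]]] := hom_factor_surj h.
by apply: ndx; exists i, (act u y), t; rewrite def_x def_h act_comp.
Qed.

Lemma EZ_decomposition j (x : B j) : exists i (y : B i) (s : hom j i),
  [/\ i <= j, nondegenerate y, hsurj s & x = act s y].
Proof.
elim/ltn_ind: j x => j IHj x.
have [ndx|/NNPP [k [y [f [lt_kj def_x]]]]] := classic (nondegenerate x).
  by exists j, x, (hid j); rewrite act_id; split => //; apply: hsurj_id.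
have [i [s [u [s_surj def_f le_ik _]]]] := hom_factor_surj f.
have lt_ij := leq_ltn_trans le_ik lt_kj.
have [i' [y' [s' [le_i'i ndy' s'_surj def_uy]]]] := IHj i lt_ij (act u y).
exists i', y', (hcomp s' s); split => //.
- exact: leq_trans le_i'i (ltnW lt_ij).
- exact: hsurj_comp.
- by rewrite def_x def_f act_comp def_uy -act_comp.
Qed.

Lemma EZ_dim_leq M j j' (x : B j) (x' : B j') (s : hom M j) (s' : hom M j') :
  nondegenerate x -> hsurj s -> act s x = act s' x' -> j <= j'.
Proof.
move=> ndx s_surj e; have [d [sdK _]] := hsurj_section_at ord0 s_surj.
rewrite leqNgt; apply/negP => lt_j'j; apply: ndx; exists j', x', (hcomp s' d).
by rewrite act_comp -e -act_comp sdK act_id.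
Qed.

Lemma EZ_unique M j (x x' : B j) (s s' : hom M j) :
  nondegenerate x -> hsurj s -> act s x = act s' x' -> x = x' /\ s = s'.
Proof.
move=> ndx s_surj e.
have s'_section d : hcomp s d = hid j -> hcomp s' d = hid j.
  by move=> sdK; apply: (nondegenerate_endo (y := x') ndx); rewrite act_comp -e -act_comp sdK act_id.
split.
  have [d [sdK _]] := hsurj_section_at ord0 s_surj.
  by rewrite -[x]act_id -sdK act_comp e -act_comp s'_section // act_id.
apply: hom_eq => a; have [d [sdK dsa]] := hsurj_section_at a s_surj.
by rewrite -{2}dsa -homf_comp s'_section // homf_hid.
Qed.
Lemma EZ_through M j k (x : B j) (x' : B k) (s : hom M j) (s' : hom M k) :
  nondegenerate x -> hsurj s -> act s x = act s' x' ->
  exists l (t : hom M l) (u : hom l k) (r : hom l j),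
    [/\ l <= k, s' = hcomp u t, s = hcomp r t & act u x' = act r x].
Proof.
move=> ndx s_surj e.
have [l [t [u [t_surj def_s' le_lk _]]]] := hom_factor_surj s'.
have [i [x3 [r [_ ndx3 r_surj def_ux']]]] := EZ_decomposition (act u x').
have e3 : act s x = act (hcomp r t) x3 by rewrite e def_s' !act_comp def_ux'.
have le_ji := EZ_dim_leq ndx s_surj e3.
have le_ij := EZ_dim_leq ndx3 (hsurj_comp r_surj t_surj) (esym e3).
have eij : i = j by apply/eqP; rewrite eqn_leq le_ij le_ji.
subst i; have [ex3 def_s] := EZ_unique ndx s_surj e3; subst x3.
by exists l, t, u, r.
Qed.
End EilenbergZilber.

(** * Constructing simplicial maps *)

Section GlueFaces.
Variables (E : sSet) (n : nat) (S : pred 'I_n.+2) (P : forall j, hom j n.+1 -> bool).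
Hypotheses (P_closed : forall j k (g : hom j k) (f : hom k n.+1), P f -> P (hcomp f g))
  (PE : forall j (f : hom j n.+1), P f = [exists i, (i \in S) && [forall a, homf f a != i]]).
Variable y : 'I_n.+2 -> E n.
Hypothesis y_compat : forall i j, i \in S -> j \in S -> i != j -> forall k (f g : hom k n),
  k < n -> hcomp (coface j) f = hcomp (coface i) g -> act f (y j) = act g (y i).

Lemma glue_compat i j : i \in S -> j \in S -> forall k (f g : hom k n),
  hcomp (coface j) f = hcomp (coface i) g -> act f (y j) = act g (y i).
Proof.
move=> iS jS k f g e; have [eij|nij] := eqVneq i j; first by subst j; rewrite (coface_inj e).
have [k' [s [f' [s_surj def_f _ [f_surj|lt_k'n]]]]] := hom_factor_surj f.
  exfalso; case: (unliftP j i) => [c def_i|def_i]; last by rewrite def_i eqxx in nij.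
  have [a fa] := f_surj c; have := congr1 (fun h => homf h a) e.
  by rewrite !homf_comp !homf_coface fa -def_i => /esym/eqP; rewrite lift_eqF.
have [d [sdK _]] := hsurj_section_at ord0 s_surj.
have e' : hcomp (coface j) f' = hcomp (coface i) (hcomp g d).
  by rewrite hcompA -e def_f -!hcompA sdK hcomp_idr.
have def_g : g = hcomp (hcomp g d) s.
  by apply: (coface_inj (i := i)); rewrite [RHS]hcompA -e' -hcompA -def_f e.
by rewrite def_f def_g act_comp [RHS]act_comp (y_compat iS jS nij lt_k'n e').
Qed.

Definition missed_face k (f : hom k n.+1) : 'I_n.+2 :=
  odflt ord0 [pick i | (i \in S) && [forall a, homf f a != i]].

Lemma missed_faceP k (f : hom k n.+1) :
  P f -> missed_face f \in S /\ forall a, homf f a != missed_face f.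
Proof.
rewrite PE /missed_face; case: pickP => [i /andP [iS /forallP miss] //|none].
by case/existsP => i; rewrite none.
Qed.

Definition glue_fun k (x : subDelta P_closed k) : E k :=
  act (hunlift (missed_face (sval x)) (sval x)) (y (missed_face (sval x))).

Lemma glue_nat k l (g : hom k l) (x : subDelta P_closed l) :
  glue_fun (act g x) = act g (glue_fun x).
Proof.
case: x => f Pf; rewrite /glue_fun /= -act_comp.
have [iS imiss] := missed_faceP (P_closed g Pf); have [jS jmiss] := missed_faceP Pf.
by apply: glue_compat; rewrite // hunliftK // hcompA hunliftK.
Qed.

Definition glue : smap (subDelta P_closed) E := SMap glue_nat.

Lemma glue_face i (Pi : P (coface i)) : i \in S -> glue n (exist _ (coface i) Pi) = y i.
Proof.
move=> iS; have [jS jmiss] := missed_faceP Pi.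
by rewrite -[RHS]act_id; apply: glue_compat; rewrite // hunliftK // hcomp_idr.
Qed.

Lemma glue_val k (x : subDelta P_closed k) : exists i (f : hom k n),
  [/\ i \in S, sval x = hcomp (coface i) f & glue k x = act f (y i)].
Proof.
case: x => f Pf; have [iS imiss] := missed_faceP Pf.
by exists (missed_face f), (hunlift (missed_face f) f); rewrite hunliftK.
Qed.
End GlueFaces.

Lemma coface_bdry m (i : 'I_m.+2) : bdry_pred (coface i).
Proof. by apply/existsP; exists i; apply/forallP => a; rewrite homf_coface eq_sym neq_lift. Qed.

Definition bdry_coface m (i : 'I_m.+2) : bdry m.+1 m := exist _ (coface i) (coface_bdry i).

Lemma bdry_predE m j (f : hom j m.+1) :
  bdry_pred f = [exists i, (i \in predT) && [forall a, homf f a != i]].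
Proof. exact: eq_existsb. Qed.

Lemma lt_bdry_pred k m (f : hom k m) : k < m -> bdry_pred f.
Proof.
move=> lt_km; have [|c miss] := @not_hsurj_miss _ _ f.
  by move/hsurj_leq; rewrite leqNgt lt_km.
by apply/existsP; exists c; apply/forallP.
Qed.

Lemma bdry_smap_val (E : sSet) m j (g : smap (bdry m.+1) E) (f : bdry m.+1 j) :
  exists a (f' : hom j m),
    sval f = hcomp (coface a) f' /\ g j f = act f' (g m (bdry_coface a)).
Proof.
case/existsP: (svalP f) => a /forallP miss.
exists a, (hunlift a (sval f)); split; first by rewrite hunliftK.
rewrite -smnat; congr (g j _); apply: val_inj => /=; by rewrite hunliftK.
Qed.

Section CellwiseMap.
Variables (B E : sSet) (P : forall m, B m -> E m -> Prop).
Hypotheses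
  (P_degen : forall m k (s : hom k m) (b : B m) y, hsurj s -> P b y -> P (act s b) (act s y))
  (P_vertex : forall b : B 0, exists y, P b y)
  (P_extend : forall m (b : B m.+1) (g : smap (bdry m.+1) E),
     (forall i, P (act (coface i) b) (g m (bdry_coface i))) ->
     exists y, P b y /\ forall j (f : bdry m.+1 j), act (sval f) y = g j f).

Definition pmap := forall k, B k -> option (E k).

Definition pmap_below m (L : pmap) : Prop :=
  (forall k (b : B k), k < m -> exists y, L k b = Some y /\ P b y) /\
  (forall k j (f : hom k j) (b : B j) y, k < m -> j < m -> L j b = Some y ->
     L k (act f b) = Some (act f y)).

Definition extends (L : pmap) m (b : B m) (y : E m) : Prop :=
  [/\ P b y,
      forall k (f : hom k m), k < m -> L k (act f b) = Some (act f y) &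
      forall j (g : B j) (s : hom m j), j < m -> b = act s g ->
        exists z, L j g = Some z /\ y = act s z].

Lemma extends_degenerate m L (b : B m) :
  pmap_below m L -> ~ nondegenerate b -> exists y, extends L b y.
Proof.
move=> [L_def L_nat] degb.
have [i [g0 [r [le_im ndg0 r_surj def_b]]]] := EZ_decomposition b.
have lt_im : i < m.
  rewrite ltn_neqAle le_im andbT; apply/eqP => eim; subst i; apply: degb.
  by rewrite def_b (hsurj_endo_hid r_surj) act_id.
have [z [Lz Pz]] := L_def _ g0 lt_im.
exists (act r z); split.
- by rewrite def_b; apply: P_degen.
- by move=> k f lt_km; rewrite def_b -!act_comp (L_nat _ _ _ _ _ lt_km lt_im Lz).
move=> j g s lt_jm def_b'; have [z' [Lz' _]] := L_def _ g lt_jm; exists z'; split => //.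
have [l [t [u [r' [le_lj def_s def_r e]]]]] :=
  EZ_through ndg0 r_surj (etrans (esym def_b) def_b').
have lt_lm := leq_ltn_trans le_lj lt_jm.
have := L_nat _ _ u _ _ lt_lm lt_jm Lz'; rewrite e (L_nat _ _ r' _ _ lt_lm lt_im Lz).
by move=> [e']; rewrite def_s def_r !act_comp e'.
Qed.

Lemma extends_nondegenerate m L (b : B m) :
  pmap_below m L -> nondegenerate b -> exists y, extends L b y.
Proof.
case: m b => [|m] b [L_def L_nat] ndb.
  by have [y Py] := P_vertex b; exists y; split => // [k|j] *; rewrite ltn0.
have [z0 _] := L_def _ (act (coface ord0) b) (ltnSn m).
pose y i := odflt z0 (L m (act (coface i) b)).
have Ly i : L m (act (coface i) b) = Some (y i) /\ P (act (coface i) b) (y i).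
  by have [z [Lz Pz]] := L_def _ (act (coface i) b) (ltnSn m); rewrite /y Lz.
have y_compat i j : i \in predT -> j \in predT -> i != j -> forall k (f g : hom k m),
    k < m -> hcomp (coface j) f = hcomp (coface i) g -> act f (y j) = act g (y i).
  move=> _ _ _ k f g lt_km e.
  have := L_nat _ _ f _ _ (leqW lt_km) (ltnSn m) (proj1 (Ly j)).
  have := L_nat _ _ g _ _ (leqW lt_km) (ltnSn m) (proj1 (Ly i)).
  by rewrite -!act_comp e => -> [].
pose g := glue (@bdry_closed m.+1) (@bdry_predE m) y_compat.
have [x [Px gx]] : exists x, P b x /\ forall j (f : bdry m.+1 j), act (sval f) x = g j f.
  by apply: P_extend => i; rewrite /g glue_face //; apply: (proj2 (Ly i)).
exists x; split => //; last first.
  by move=> j g0 s lt_jm def_b; case: ndb; exists j, g0, s.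
move=> k f lt_km; pose fb : bdry m.+1 k := exist _ f (lt_bdry_pred f lt_km).
have [i [f' [_ def_f gfb]]] := glue_val (@bdry_predE m) y_compat fb.
have -> : act f x = act f' (y i) by rewrite -gfb -gx.
rewrite [f]def_f act_comp; apply: L_nat (proj1 (Ly i)) => //; exact: leqW.
Qed.

Lemma extends_exists m L (b : B m) : pmap_below m L -> exists y, extends L b y.
Proof.
move=> L_below; have [ndb|degb] := classic (nondegenerate b).
  exact: extends_nondegenerate.
exact: extends_degenerate.
Qed.

Definition extension (L : pmap) k (b : B k) : option (E k) :=
  match excluded_middle_informative (exists y, extends L b y) with
  | left ex => Some (proj1_sig (constructive_indefinite_description _ ex))
  | right _ => None
  end.

Lemma extensionP L k (b : B k) :
  pmap_below k L -> exists y, extension L b = Some y /\ extends L b y.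
Proof.
move=> /(extends_exists b) ex; rewrite /extension.
case: excluded_middle_informative => // ex'.
by case: constructive_indefinite_description => y ext_y; exists y.
Qed.

Definition extend_pmap (L : pmap) m : pmap := fun k b =>
  if k < m then L k b else if k == m then extension L b else None.

Lemma extension_nat m L (f : hom m m) (b : B m) y : pmap_below m L ->
  extension L b = Some y -> extension L (act f b) = Some (act f y).
Proof.
move=> L_below Lb; have [y' [Lfb [_ _ y'_degen]]] := extensionP (act f b) L_below.
have [y0 [Ly [_ y_faces _]]] := extensionP b L_below.
move: Ly; rewrite Lb => -[ey]; subst y0; rewrite Lfb.
have [i [s [u [s_surj def_f _ [f_surj|lt_im]]]]] := hom_factor_surj f.
  by move: Lfb; rewrite (hsurj_endo_hid f_surj) !act_id Lb.
have e : act f b = act s (act u b) by rewrite def_f act_comp.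
have [z [Lz ->]] := y'_degen _ (act u b) s lt_im e.
by move: Lz; rewrite y_faces // => -[<-]; rewrite def_f act_comp.
Qed.

Lemma extend_pmap_below m L : pmap_below m L -> pmap_below m.+1 (extend_pmap L m).
Proof.
move=> L_below; have [L_def L_nat] := L_below.
have Lm (b : B m) : extend_pmap L m b = extension L b by rewrite /extend_pmap ltnn eqxx.
have Llt k (b : B k) : k < m -> extend_pmap L m b = L k b by rewrite /extend_pmap => ->.
split=> [k b|k j f b y].
  rewrite ltnS leq_eqVlt => /predU1P [ekm|lt_km]; last by rewrite Llt //; apply: L_def.
  by subst k; have [y [Ly [Py _ _]]] := extensionP b L_below; exists y; rewrite Lm.
rewrite !ltnS leq_eqVlt => /predU1P [ekm|lt_km]; rewrite leq_eqVlt => /predU1P [ejm|lt_jm]; subst.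
- by rewrite !Lm; apply: extension_nat.
- rewrite Llt // Lm => Lb; have [y' [-> [_ _ y'_degen]]] := extensionP (act f b) L_below.
  by have [z [Lz ->]] := y'_degen _ b f lt_jm erefl; move: Lz; rewrite Lb => -[->].
- rewrite Lm Llt // => Lb; have [y' [Ly' [_ y'_faces _]]] := extensionP b L_below.
  by move: Ly'; rewrite Lb => -[ey]; subst y'; apply: y'_faces.
- by rewrite !Llt //; apply: L_nat.
Qed.

(** [stage m] is defined exactly in the dimensions below [m]; as each stage only
    chooses values in one new dimension, the stages are coherent. *)
Fixpoint stage m : pmap :=
  if m is m'.+1 then extend_pmap (stage m') m' else fun _ _ => None.

Lemma stage_below m : pmap_below m (stage m).
Proof.
elim: m => [|m IHm]; last exact: extend_pmap_below.
by split=> [k b|k j f b y]; rewrite ltn0.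
Qed.

Lemma stage_stable m k (b : B k) : k < m -> stage m b = stage k.+1 b.
Proof.
elim: m => [//|m IHm]; rewrite ltnS leq_eqVlt => /predU1P [ekm|lt_km]; first by subst.
by rewrite -IHm //= /extend_pmap lt_km.
Qed.

Lemma exists_smap_cellwise : exists F : smap B E, forall m b, P b (F m b).
Proof.
have stage_def k (b : B k) : exists y, stage k.+1 b = Some y /\ P b y.
  exact: (proj1 (stage_below k.+1)).
pose F k b := proj1_sig (constructive_indefinite_description _ (stage_def k b)).
have F_spec k b : stage k.+1 b = Some (F k b) /\ P b (F k b).
  exact: proj2_sig (constructive_indefinite_description _ (stage_def k b)).
have F_nat k j (f : hom k j) (b : B j) : F k (act f b) = act f (F j b).
  pose M := (maxn k j).+1; have lt_kM : k < M by rewrite ltnS leq_maxl.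
  have lt_jM : j < M by rewrite ltnS leq_maxr.
  have := proj2 (stage_below M) _ _ f b (F j b) lt_kM lt_jM.
  rewrite !stage_stable // (proj1 (F_spec k _)) (proj1 (F_spec j b)).
  by move=> /(_ erefl) [].
by exists (SMap F_nat) => m b; apply: (proj2 (F_spec m b)).
Qed.
End CellwiseMap.

(** * Isomorphisms in the fundamental category *)

Section Tau1.
Variable K : sSet.

Lemma kpath_cat (x y z : K 0) p q : kpath x y p -> kpath y z q -> kpath x z (p ++ q).
Proof. by elim=> // x' y' e p' src_e _ IHp q_path; apply: kpath_cons (IHp q_path). Qed.

Lemma tau1_iso_refl (x : K 0) : tau1_iso x x.
Proof. by exists [::], [::]; split; do ?constructor. Qed.

Lemma tau1_iso_sym (x y : K 0) : tau1_iso x y -> tau1_iso y x.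
Proof. by case=> p [q [pxy qyx pq qp]]; exists q, p. Qed.

Lemma tau1_iso_trans (x y z : K 0) : tau1_iso x y -> tau1_iso y z -> tau1_iso x z.
Proof.
case=> p [q [pxy qyx pq qp]] [p' [q' [pyz qzy pq' qp']]].
exists (p ++ p'), (q' ++ q); split; [exact: kpath_cat pxy pyz|exact: kpath_cat qzy qyx| |].
- rewrite -catA (catA p') -[p ++ _]/(p ++ (p' ++ q') ++ q).
  exact: hrel_trans (hrel_cong pxy pq' qyx) pq.
- rewrite -catA (catA q) -[q' ++ _]/(q' ++ (q ++ p) ++ p').
  exact: hrel_trans (hrel_cong qzy qp pyz) qp'.
Qed.
End Tau1.

Section Tau1Map.
Variables (K L : sSet) (F : smap K L).

Lemma kpath_map x y p : kpath x y p -> kpath (F 0 x) (F 0 y) (map (F 1) p).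
Proof.
elim=> [x'|x' y' e p' src_e _ IHp] /=; first exact: kpath_nil.
apply: kpath_cons; first by rewrite /esrc -smnat -src_e.
by rewrite /etgt -smnat.
Qed.

Lemma hrel_map x y p q :
  hrel x y p q -> hrel (F 0 x) (F 0 y) (map (F 1) p) (map (F 1) q).
Proof.
have face2_map i s : face2 i (F 2 s) = F 1 (face2 i s) by rewrite /face2 smnat.
elim=> {x y p q}.
- by move=> x y p /kpath_map; apply: hrel_refl.
- by move=> x y p q _; apply: hrel_sym.
- by move=> x y p q r _ IHpq _; apply: hrel_trans.
- move=> z x y w q p p' r qzx _ IHp ryw; rewrite !map_cat.
  exact: hrel_cong (kpath_map qzx) IHp (kpath_map ryw).
- by move=> x /=; rewrite /degen smnat; apply: hrel_degen.
- move=> x z s /kpath_map /=; rewrite -!face2_map; exact: hrel_simplex.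
Qed.

Lemma tau1_iso_map (x y : K 0) : tau1_iso x y -> tau1_iso (F 0 x) (F 0 y).
Proof.
case=> p [q [pxy qyx pq qp]]; exists (map (F 1) p), (map (F 1) q).
by split; rewrite -?map_cat; [exact: kpath_map|exact: kpath_map|exact: (hrel_map pq)|exact: (hrel_map qp)].
Qed.
End Tau1Map.

(** The nerve of the contractible groupoid on the objects [false] and [true]:
    a [k]-simplex is any map [[k] -> bool]. *)
Definition Jsimp k := {ffun 'I_k.+1 -> bool}.

Definition Jact m n (f : hom m n) (p : Jsimp n) : Jsimp m := [ffun i => p (homf f i)].

Lemma Jact_id n (p : Jsimp n) : Jact (hid n) p = p.
Proof. by apply/ffunP => i; rewrite ffunE homf_hid. Qed.

Lemma Jact_comp m n q (f : hom m n) (g : hom n q) (p : Jsimp q) :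
  Jact (hcomp g f) p = Jact f (Jact g p).
Proof. by apply/ffunP => i; rewrite !ffunE homf_comp. Qed.

Definition J : sSet := SSet Jact_id Jact_comp.

Definition Jconst (c : bool) m : J m := [ffun=> c].

Lemma act_Jconst m k (f : hom k m) c : act f (Jconst c m) = Jconst c k.
Proof. by apply/ffunP => i; rewrite !ffunE. Qed.

Lemma Jconst_inj m : injective (Jconst^~ m).
Proof. by move=> c c' /ffunP/(_ ord0); rewrite !ffunE. Qed.

Lemma J0_const (p : J 0) : p = Jconst (p ord0) 0.
Proof. by apply/ffunP => i; rewrite ffunE ord1. Qed.

Lemma hsurj_act_Jconst m k (s : hom k m) (p : J m) c :
  hsurj s -> act s p = Jconst c k -> p = Jconst c m.
Proof.
move=> s_surj /ffunP sp; apply/ffunP => i; have [a <-] := s_surj i.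
by move: (sp a); rewrite !ffunE ?homf_coface ?mkhomE.
Qed.

Definition Jedge (c : bool) : J 1 := [ffun i => if i == ord0 then c else ~~ c].

Definition Jtriangle (c : bool) : J 2 := [ffun i => if i == ord1_3 then ~~ c else c].

Lemma esrc_Jedge c : esrc (Jedge c) = Jconst c 0.
Proof. by apply/ffunP => i; rewrite !ffunE ord1 homf_coface. Qed.

Lemma etgt_Jedge c : etgt (Jedge c) = Jconst (~~ c) 0.
Proof. by apply/ffunP => i; rewrite !ffunE ord1 homf_coface. Qed.

Lemma kpath_Jedge c : kpath (Jconst c 0) (Jconst (~~ c) 0) [:: Jedge c].
Proof. by apply: kpath_cons (esrc_Jedge c) _; rewrite etgt_Jedge; apply: kpath_nil. Qed.

Lemma Jloop (c : bool) :
  hrel (Jconst c 0) (Jconst c 0) [:: Jedge c; Jedge (~~ c)] [::].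
Proof.
have d2 : face2 ord2_3 (Jtriangle c) = Jedge c.
  by apply/ffunP => i; rewrite !ffunE homf_coface; case: i => [[|[|i]] lt_i] //=.
have d0 : face2 ord0 (Jtriangle c) = Jedge (~~ c).
  apply/ffunP => i; rewrite !ffunE homf_coface negbK.
  by case: i => [[|[|i]] lt_i] //=.
have d1 : face2 ord1_3 (Jtriangle c) = degen (Jconst c 0).
  by apply/ffunP => i; rewrite !ffunE homf_coface; case: i => [[|[|i]] lt_i] //=.
apply: hrel_trans (hrel_degen _); rewrite -d0 -d1 -d2; apply: hrel_simplex.
rewrite d0 d2; apply: kpath_cat (kpath_Jedge c) _.
by rewrite -{2}[c]negbK; apply: kpath_Jedge.
Qed.

Lemma tau1_iso_J : tau1_iso (Jconst false 0) (Jconst true 0).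
Proof.
exists [:: Jedge false], [:: Jedge true].
by split; [apply: kpath_Jedge|apply: kpath_Jedge|apply: Jloop|apply: Jloop].
Qed.

(** * Row homotopies *)

Lemma bact_hid_comm (X : bsSet) m m' n n' (f : hom m' m) (g : hom n' n) (x : X m n) :
  bact f (hid n') (bact (hid m) g x) = bact (hid m') g (bact f (hid n) x).
Proof. by rewrite -!bact_comp !hcomp_idl !hcomp_idr. Qed.

Lemma bact_hcompr (X : bsSet) m m' n n' n'' (f : hom m' m) (g : hom n' n)
    (h : hom n'' n') (x : X m n) :
  bact f (hcomp g h) x = bact f h (bact (hid m) g x).
Proof. by rewrite -bact_comp hcomp_idl. Qed.

Lemma slash_yoneda_nat (X : bsSet) m k (z : X m k) i i' j j' (f : hom i' i) (g : hom j' j)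
    (q : box (Delta m) (Delta k) i j) :
  bact (act f q.1) (act g q.2) z = bact f g (bact q.1 q.2 z).
Proof. by rewrite -bact_comp. Qed.

(** The simplex of [Delta[m] \ X] that corresponds to [z] under the Yoneda lemma. *)
Definition slash_yoneda (X : bsSet) m k (z : X m k) : slash (Delta m) X k :=
  BSMap (slash_yoneda_nat z).

Lemma slash_Delta_val (X : bsSet) m k (s : slash (Delta m) X k) i j
    (q : box (Delta m) (Delta k) i j) :
  s i j q = bact q.1 q.2 (s m k (hid m, hid k)).
Proof.
rewrite -bsmnat; case: q => a b; congr (s i j (_, _)) => /=; by rewrite hcomp_idl.
Qed.

Section RowHomotopy.
Variable X : bsSet.

Definition row_homotopy n (H : smap (prodS (row X n) J) (row X n)) : Prop :=
  (forall m x, H m (x, Jconst false m) = x) /\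
  (forall m x, H m (x, Jconst true m) = bact (hid m) (const0 n) x).

Definition inner_face_compatible n (H : smap (prodS (row X n) J) (row X n))
    (H' : smap (prodS (row X n.+1) J) (row X n.+1)) : Prop :=
  forall m x p (i : 'I_n.+2), i != ord0 ->
    bact (hid m) (coface i) (H' m (x, p)) = H m (bact (hid m) (coface i) x, p).

Definition face_coherent n (H : smap (prodS (row X n) J) (row X n)) : Prop :=
  forall m (x : X m n.+1) p (i j : 'I_n.+2) k (f g : hom k n),
    i != ord0 -> j != ord0 -> i != j -> hcomp (coface j) f = hcomp (coface i) g ->
    bact (hid m) f (H m (bact (hid m) (coface j) x, p)) =
    bact (hid m) g (H m (bact (hid m) (coface i) x, p)).

Lemma face_coherent0 (H : smap (prodS (row X 0) J) (row X 0)) : face_coherent H.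
Proof. by move=> m x p [[|[|i]] ?] [[|[|j]] ?]. Qed.

Lemma face_coherent_compatible n (H : smap (prodS (row X n) J) (row X n))
    (H' : smap (prodS (row X n.+1) J) (row X n.+1)) :
  inner_face_compatible H H' -> face_coherent H'.
Proof.
move=> compat m x p i j k f g i_neq0 j_neq0 i_neq_j e.
have [a [b [h [def_i def_j -> -> square]]]] := coface_square i_neq_j e.
have a_neq0 : a != ord0.
  by apply: contra_neq i_neq0 => a0; rewrite -def_i a0 lift_ord0.
have b_neq0 : b != ord0.
  by apply: contra_neq j_neq0 => b0; rewrite -def_j b0 lift_ord0.
by rewrite !bact_hcompr !compat // -!bact_comp !hcomp_idl square.
Qed.
End RowHomotopy.

Section HomotopyStep.
Variables (X : bsSet) (n : nat) (H : smap (prodS (row X n) J) (row X n)).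
Hypotheses (X_vfib : v_fibrant X) (H_htpy : row_homotopy H) (H_coh : face_coherent H).

Lemma H_act m m' (f : hom m' m) (x : X m n) (p : J m) :
  H m' (bact f (hid n) x, act f p) = bact f (hid n) (H m (x, p)).
Proof. exact: (smnat H f (x, p)). Qed.

Definition htpy_cell m (xp : prodS (row X n.+1) J m) (y : row X n.+1 m) : Prop :=
  [/\ xp.2 = Jconst false m -> y = xp.1,
      xp.2 = Jconst true m -> y = bact (hid m) (const0 n.+1) xp.1 &
      forall i : 'I_n.+2, i != ord0 ->
        bact (hid m) (coface i) y = H m (bact (hid m) (coface i) xp.1, xp.2)].

Lemma htpy_cell_const m (x : X m n.+1) c :
  htpy_cell (x, Jconst c m) (if c then bact (hid m) (const0 n.+1) x else x).
Proof.
have [H0 H1] := H_htpy; split=> /= [/Jconst_inj -> //|/Jconst_inj -> //|i i_neq0].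
by case: c; rewrite ?H0 // H1 -!bact_comp !hcomp_idl const0_coface.
Qed.

Lemma htpy_cell_degen m k (s : hom k m) xp y :
  hsurj s -> htpy_cell xp y -> htpy_cell (act s xp) (act s y).
Proof.
case: xp => x p s_surj [y_false y_true y_faces]; split=> /=.
- by move/(hsurj_act_Jconst s_surj)/y_false ->.
- by move/(hsurj_act_Jconst s_surj)/y_true ->; rewrite -!bact_comp !hcomp_idl !hcomp_idr.
- move=> i i_neq0; change (bact (hid k) (coface i) (bact s (hid n.+1) y) =
    H k (bact (hid k) (coface i) (bact s (hid n.+1) x), act s p)).
  by rewrite -bact_hid_comm y_faces // -bact_hid_comm H_act.
Qed.

Section Lift.
Variables (m : nat) (x : X m.+1 n.+1) (p : J m.+1) (g : smap (bdry m.+1) (row X n.+1)).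
Hypothesis g_cells : forall i : 'I_m.+2,
  htpy_cell (act (coface i) ((x, p) : prodS (row X n.+1) J m.+1)) (g m (bdry_coface i)).

Definition inner_face_htpy (i : 'I_n.+2) : X m.+1 n :=
  H m.+1 (bact (hid m.+1) (coface i) x, p).

Lemma g_inner_face j (q : bdry m.+1 j) (i : 'I_n.+2) : i != ord0 ->
  bact (hid j) (coface i) (g j q) = bact (sval q) (hid n) (inner_face_htpy i).
Proof.
move=> i_neq0; have [a [f [def_q ->]]] := bdry_smap_val g q.
have [_ _ ga_faces] := g_cells a.
change (bact (hid j) (coface i) (bact f (hid n.+1) (g m (bdry_coface a))) =
  bact (sval q) (hid n) (inner_face_htpy i)).
rewrite -bact_hid_comm ga_faces // /inner_face_htpy -!H_act def_q.
congr (H j (_, _)); first by rewrite -!bact_comp !hcomp_idl !hcomp_idr.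
by rewrite act_comp.
Qed.

Lemma bdry_part_nat k (w : hom k n.+1) i i' j j' (f : hom i' i) (v : hom j' j)
    (q : box (bdry m.+1) (Delta k) i j) :
  bact (hid i') (hcomp w (act v q.2)) (g i' (act f q.1)) =
  bact f v (bact (hid i) (hcomp w q.2) (g i q.1)).
Proof.
rewrite smnat; change (bact (hid i') (hcomp w (hcomp q.2 v)) (bact f (hid n.+1) (g i q.1)) =
  bact f v (bact (hid i) (hcomp w q.2) (g i q.1))).
by rewrite -!bact_comp !hcomp_idl !hcomp_idr hcompA.
Qed.

Definition bdry_part_fun k (w : hom k n.+1) : slash (bdry m.+1) X k :=
  BSMap (bdry_part_nat w).

Lemma bdry_part_fun_nat k' k (f : hom k' k) (w : hom k n.+1) :
  bdry_part_fun (hcomp w f) = act f (bdry_part_fun w).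
Proof. by apply: bsmap_eq => i j q /=; rewrite hcompA. Qed.

Definition bdry_part : smap (Delta n.+1) (slash (bdry m.+1) X) :=
  @SMap (Delta n.+1) (slash (bdry m.+1) X) bdry_part_fun bdry_part_fun_nat.

Lemma horn0E j (f : hom j n.+1) :
  horn_pred ord0 f = [exists i, (i \in predC1 ord0) && [forall a, homf f a != i]].
Proof. exact: eq_existsb. Qed.

Lemma horn_part_compat i j : i \in predC1 ord0 -> j \in predC1 ord0 -> i != j ->
  forall k (f f' : hom k n), k < n -> hcomp (coface j) f = hcomp (coface i) f' ->
  act f (slash_yoneda (inner_face_htpy j)) = act f' (slash_yoneda (inner_face_htpy i)).
Proof.
move=> i_neq0 j_neq0 i_neq_j k f f' _ e; apply: bsmap_eq => a b q /=.
by rewrite !bact_hcompr (H_coh x p i_neq0 j_neq0 i_neq_j e).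
Qed.

Definition horn_part : smap (horn (ord0 : 'I_n.+2)) (slash (Delta m.+1) X) :=
  glue (@horn_closed n.+1 ord0) horn0E horn_part_compat.

Lemma horn_bdry_compat j (w : horn (ord0 : 'I_n.+2) j) :
  slashMap (bdryIncl m.+1) X j (horn_part j w) = bdry_part j (hornIncl ord0 j w).
Proof.
have [i [w' [i_neq0 def_w ->]]] := glue_val horn0E horn_part_compat w.
apply: bsmap_eq => a b q.
change (bact (sval q.1) (hcomp w' q.2) (inner_face_htpy i) =
  bact (hid a) (hcomp (sval w) q.2) (g a q.1)).
by rewrite def_w -hcompA [RHS]bact_hcompr g_inner_face // -!bact_comp !hcomp_idl !hcomp_idr.
Qed.

Lemma htpy_cell_lift : (forall c, p <> Jconst c m.+1) ->
  exists y, htpy_cell ((x, p) : prodS (row X n.+1) J m.+1) y /\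
    forall j (f : bdry m.+1 j), act (sval f) y = g j f.
Proof.
move=> p_nconst.
have [l [l_horn l_bdry]] := X_vfib (ltn0Sn n) horn_bdry_compat.
pose y := l n.+1 (hid n.+1) m.+1 n.+1 (hid m.+1, hid n.+1).
have l_val k (w : hom k n.+1) i j (a : hom i m.+1) (b : hom j k) :
    l k w i j (a, b) = bact a (hcomp w b) y.
  rewrite -[w]hcomp_idl; rewrite (smnat l w (hid n.+1)) /= slash_Delta_val /=.
  by rewrite hcomp_idl.
exists y; split; first split.
- by move=> p_false; case: (p_nconst false).
- by move=> p_true; case: (p_nconst true).
- move=> i i_neq0 /=.
  have horn_i : horn_pred (ord0 : 'I_n.+2) (coface i).
    apply/existsP; exists i; rewrite i_neq0; apply/forallP => a.
    by rewrite homf_coface eq_sym neq_lift.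
  have := l_horn n (exist _ (coface i) horn_i); rewrite /horn_part glue_face //.
  move/(congr1 (fun s : slash (Delta m.+1) X n => s m.+1 n (hid m.+1, hid n))).
  by rewrite /= l_val hcomp_idr bact_id.
- move=> j f; have := congr1 (fun s : slash (bdry m.+1) X n.+1 => s j n.+1 (f, hid n.+1))
    (l_bdry n.+1 (hid n.+1)).
  by rewrite /= l_val !hcomp_idl bact_id.
Qed.
End Lift.

Lemma htpy_cell_extend m (xp : prodS (row X n.+1) J m.+1)
    (g : smap (bdry m.+1) (row X n.+1)) :
  (forall i, htpy_cell (act (coface i) xp) (g m (bdry_coface i))) ->
  exists y, htpy_cell xp y /\ forall j (f : bdry m.+1 j), act (sval f) y = g j f.
Proof.
case: xp => x p g_cells.
have [[c def_p]|p_nconst] := classic (exists c, p = Jconst c m.+1); last first.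
  by apply: htpy_cell_lift => // c def_p; apply: p_nconst; exists c.
subst p; eexists; split; first exact: htpy_cell_const.
move=> j f; have [a [f' [-> ->]]] := bdry_smap_val g f.
have [ga_false ga_true _] := g_cells a; rewrite act_comp; congr (act f' _).
case: c {g_cells} ga_false ga_true => [_ ga_true|ga_false _]; last first.
  by rewrite ga_false //; apply: act_Jconst.
rewrite ga_true; last exact: act_Jconst.
change (bact (coface a) (hid n.+1) (bact (hid m.+1) (const0 n.+1) x) =
  bact (hid m) (const0 n.+1) (bact (coface a) (hid n.+1) x)).
exact: bact_hid_comm.
Qed.

Lemma homotopy_step : exists H', row_homotopy H' /\ inner_face_compatible H H'.
Proof.
have cell0 (xp : prodS (row X n.+1) J 0) : exists y, htpy_cell xp y.
  by case: xp => x p; rewrite (J0_const p); eexists; apply: htpy_cell_const.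
have [H' H'_cells] := exists_smap_cellwise htpy_cell_degen cell0 htpy_cell_extend.
exists H'; split; first split=> m x.
- by have [H'_false _ _] := H'_cells m (x, Jconst false m); apply: H'_false.
- by have [_ H'_true _] := H'_cells m (x, Jconst true m); apply: H'_true.
- by move=> m x p i; have [_ _ H'_faces] := H'_cells m (x, p); apply: H'_faces.
Qed.
End HomotopyStep.

Lemma exists_row_homotopy (X : bsSet) : v_fibrant X -> forall n,
  exists H : smap (prodS (row X n) J) (row X n), row_homotopy H /\ face_coherent H.
Proof.
move=> X_vfib; elim=> [|n [H [H_htpy H_coh]]].
  exists (@SMap (prodS (row X 0) J) (row X 0) (fun m xp => xp.1) (fun _ _ _ _ => erefl)).
  split; last exact: face_coherent0.
  by split=> //= m x; rewrite (hom_to0_eq (const0 0) (hid 0)) bact_id.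
have [H' [H'_htpy H'_compat]] := homotopy_step X_vfib H_htpy H_coh.
by exists H'; split; last exact: face_coherent_compatible H'_compat.
Qed.

(** * Categorical constancy *)

Section Precomposition.
Variables (A B Z : sSet).

Lemma expS_precomp_nat (u : smap A B) k' k (f : hom k' k) (s : expS B Z k) :
  smcomp (act f s) (smprod u (smid (Delta k'))) =
  act (s := expS A Z) f (smcomp s (smprod u (smid (Delta k)))).
Proof. by apply: smap_eq => j [x g]. Qed.

Definition expS_precomp (u : smap A B) : smap (expS B Z) (expS A Z) :=
  @SMap (expS B Z) (expS A Z) (fun k s => smcomp s (smprod u (smid (Delta k))))
    (expS_precomp_nat u).

Lemma precomp_smid (b : expS A Z 0) : precomp (smid A) b = b.
Proof. by apply: smap_eq => j [x g]. Qed.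

Lemma precomp_smcomp C (u : smap A B) (v : smap B C) (c : expS C Z 0) :
  precomp (smcomp v u) c = precomp u (precomp v c).
Proof. by apply: smap_eq => j [x g]. Qed.
End Precomposition.

Section JHomotopy.
Variables (A Z : sSet) (H : smap (prodS A J) A) (b : expS A Z 0).

Lemma htpy_path_nat k j' j (f : hom j' j) (xw : prodS A (Delta k) j) (psi : J k) :
  b j' (H j' ((act f xw).1, act (act f xw).2 psi), toZero j') =
  act f (b j (H j (xw.1, act xw.2 psi), toZero j)).
Proof.
rewrite -(smnat b); congr (b j' (_, _)); last exact: hom_to0_eq.
by rewrite -(smnat H f (xw.1, act xw.2 psi)) /= Jact_comp.
Qed.

Definition htpy_path_fun k (psi : J k) : expS A Z k :=
  @SMap (prodS A (Delta k)) Z (fun j xw => b j (H j (xw.1, act xw.2 psi), toZero j))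
    (fun j' j f xw => htpy_path_nat f xw psi).

Lemma htpy_path_fun_nat k' k (f : hom k' k) (psi : J k) :
  htpy_path_fun (act f psi) = act f (htpy_path_fun psi).
Proof. by apply: smap_eq => j [x g] /=; rewrite Jact_comp. Qed.

Definition htpy_path : smap J (expS A Z) := SMap htpy_path_fun_nat.

Lemma tau1_iso_J_homotopy (f0 f1 : smap A A) :
  (forall m x, H m (x, Jconst false m) = f0 m x) ->
  (forall m x, H m (x, Jconst true m) = f1 m x) ->
  tau1_iso (precomp f0 b) (precomp f1 b).
Proof.
move=> H_false H_true.
have path_at c (f : smap A A) : (forall m x, H m (x, Jconst c m) = f m x) ->
    htpy_path 0 (Jconst c 0) = precomp f b.
  move=> H_c; apply: smap_eq => j [x g] /=.
  have -> : Jact g (Jconst c 0) = Jconst c j by apply: act_Jconst.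
  by rewrite H_c; congr (b j (_, _)); apply: hom_to0_eq.
by rewrite -(path_at _ _ H_false) -(path_at _ _ H_true); apply: tau1_iso_map tau1_iso_J.
Qed.
End JHomotopy.

Definition row_retraction (X : bsSet) n : smap (row X n) (row X 0) :=
  @SMap (row X n) (row X 0) (fun m x => bact (hid m) (vertex0 n) x)
    (fun m' m f x => esym (bact_hid_comm f (vertex0 n) x)).

Lemma rowMap_retraction (X : bsSet) n :
  smcomp (row_retraction X n) (rowMap X n) = smid (row X 0).
Proof.
apply: smap_eq => m x /=.
by rewrite -bact_comp hcomp_idl (hom_to0_eq (hcomp _ _) (hid 0)) bact_id.
Qed.

Theorem proposition2p8 (X : bsSet) :
  v_fibrant X -> forall n : nat, weak_cat_equiv (rowMap X n).
Proof.
move=> X_vfib n Z _; set s := rowMap X n; set r := row_retraction X n.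
have [H [[H_false H_true] _]] := exists_row_homotopy X_vfib n.
have b_iso (b : expS (row X n) Z 0) : tau1_iso b (precomp r (precomp s b)).
  rewrite -precomp_smcomp -[X in tau1_iso X]precomp_smid.
  apply: (tau1_iso_J_homotopy (H := H)) => // m x.
  by rewrite H_true /= -bact_comp hcomp_idl.
split=> [b b' /(tau1_iso_map (expS_precomp Z r)) iso|a].
  exact: tau1_iso_trans (b_iso b) (tau1_iso_trans iso (tau1_iso_sym (b_iso b'))).
exists (precomp r a); rewrite -precomp_smcomp rowMap_retraction precomp_smid.
exact: tau1_iso_refl.
Qed.
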